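(* Let $W$, $a^\pm$, $r_0$ be as in the context. For any fixed $L\ge1$ and any fixed $V\in\mathcal{X}_L$, the function $c\mapsto E_c(V)$ is continuous on $F:=\{c>0:|E_c(V)|<\infty\}$.
   Context: $W\in C^2_{\mathrm{loc}}(\mathbb{R}^N)$, $a^\pm$ local minima with $W(a^-)<0=W(a^+)$, $a^-$ a global minimum, $W^{-1}([W(a^-),0])$ compact. $r_0>0$ is such that $W\ge0$ on $\{|u-a^+|\le r_0\}$ and $W<0$ on $\{|u-a^-|\le r_0\}$. $E_c(U):=\int_{\mathbb{R}}(\tfrac12|U_x|^2+W(U))e^{cx}dx$; $\mathcal{X}_L:=\{U\in[H^1_{\mathrm{loc}}(\mathbb{R})]^N: |U(x)-a^+|\le r_0\ (x\ge L),\ |U(x)-a^-|\le r_0\ (x\le-L)\}$. *)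

From HB Require Import structures.
From mathcomp Require Import all_boot all_order all_algebra.
From mathcomp Require Import all_classical all_reals all_analysis.
Set Implicit Arguments. Unset Strict Implicit. Unset Printing Implicit Defensive.
Import Order.TTheory GRing.Theory Num.Theory.
Import numFieldNormedType.Exports.
Local Open Scope classical_set_scope.
Local Open Scope ring_scope.

Definition enorm (R : realType) (N : nat) (u : 'rV[R]_N) : R :=
  Num.sqrt (\sum_(i < N) u 0 i ^+ 2).

Definition ebasis (R : realType) (N : nat) (i : 'I_N) : 'rV[R]_N := delta_mx 0 i.

Definition C2 (R : realType) (N : nat) (W : 'rV[R]_N -> R) : Prop :=
  continuous W /\
  (forall i : 'I_N,
     (forall u, derivable W u (@ebasis R N i)) /\
     continuous (fun u => 'D_(@ebasis R N i) W u) /\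
     (forall j : 'I_N,
        (forall u, derivable (fun v => 'D_(@ebasis R N i) W v) u (@ebasis R N j)) /\
        continuous (fun u => 'D_(@ebasis R N j) (fun v => 'D_(@ebasis R N i) W v) u))).

Definition local_min (R : realType) (N : nat) (W : 'rV[R]_N -> R) (a : 'rV[R]_N) : Prop :=
  \forall u \near a, W a <= W u.

Definition smooth_fun (R : realType) (phi : R -> R) : Prop :=
  exists d : nat -> R -> R, d 0%N = phi /\
    forall (k : nat) (x : R), is_derive x 1 (d k) (d k.+1 x).

Definition compact_support (R : realType) (phi : R -> R) : Prop :=
  exists M : R, forall x, M < `|x| -> phi x = 0.

Definition test_fun (R : realType) (phi : R -> R) : Prop :=
  smooth_fun phi /\ compact_support phi.

Definition L2loc (R : realType) (f : R -> R) : Prop :=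
  measurable_fun setT f /\
  forall a b : R, (\int[lebesgue_measure]_(x in `[a, b]) ((f x) ^+ 2)%:E < +oo)%E.

Definition H1loc_with_deriv (R : realType) (N : nat)
    (U Ux : R -> 'rV[R]_N) : Prop :=
  forall i : 'I_N,
    L2loc (fun x => U x 0 i) /\ L2loc (fun x => Ux x 0 i) /\
    forall phi : R -> R, test_fun phi ->
      (\int[lebesgue_measure]_(x in setT) (U x 0 i * derive1 phi x)%:E
       = - \int[lebesgue_measure]_(x in setT) (Ux x 0 i * phi x)%:E)%E.

Definition XL (R : realType) (N : nat) (aP aM : 'rV[R]_N) (r0 L : R)
    (U Ux : R -> 'rV[R]_N) : Prop :=
  H1loc_with_deriv U Ux /\
  (forall x, L <= x -> enorm (U x - aP) <= r0) /\
  (forall x, x <= - L -> enorm (U x - aM) <= r0).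

Definition Ec (R : realType) (N : nat) (W : 'rV[R]_N -> R) (c : R)
    (U Ux : R -> 'rV[R]_N) : \bar R :=
  (\int[lebesgue_measure]_(x in setT)
     (((2^-1) * enorm (Ux x) ^+ 2 + W (U x)) * expR (c * x))%:E)%E.

From HB Require Import structures.
From mathcomp Require Import all_boot all_order all_algebra.
From mathcomp Require Import all_classical all_reals all_analysis.
From mathcomp Require Import measurable_realfun lebesgue_integral_under.
From mathcomp Require Import lra.
Set Implicit Arguments. Unset Strict Implicit. Unset Printing Implicit Defensive.
Import Order.TTheory GRing.Theory Num.Theory.
Import numFieldNormedType.Exports.
Local Open Scope classical_set_scope.
Local Open Scope ring_scope.

(* For g measurable, c |-> int g(x) e^{cx} dx is continuous on the set F where
   it is finite.  Given c in F, pick c1 <= c <= c2 in F so that F lies within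
   [c1, c2] near c (c1 = c, resp. c2 = c, if F has no point below, resp. above,
   c).  For t in [c1, c2], e^{tx} <= e^{c1 x} + e^{c2 x}, so |g| (e^{c1 x} +
   e^{c2 x}) is an integrable dominating function and continuity follows by
   dominated convergence.  The integrand of E_c(V) is measurable because W is
   continuous and the components of V and V_x are measurable. *)

Lemma fin_num_integrable d (T : measurableType d) (R : realType)
    (mu : {measure set T -> \bar R}) (D : set T) (f : T -> \bar R) :
  measurable D -> measurable_fun D f ->
  (\int[mu]_(x in D) f x \is a fin_num)%E -> mu.-integrable D f.
Proof.
move=> mD mf hf; apply/integrableP; split => //.
rewrite -[fun x => _]/(abse \o f) fune_abse ge0_integralD //; last 2 first.
- exact: measurable_funepos.
- exact: measurable_funeneg.
move: hf; rewrite integralE fin_numB => /andP[h1 h2].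
by rewrite lte_add_pinfty // ltey_eq ?h1 ?h2.
Qed.

Section RowMeasurability.
Variables (R : realType) (N : nat).

Definition rat_box (q : 'rV[rat]_N * 'rV[rat]_N) : set 'rV[R]_N :=
  [set u | forall i, ratr (q.1 0 i) < u 0 i < ratr (q.2 0 i)].

Lemma open_bigcup_rat_box (O : set 'rV[R]_N) : open O ->
  O = \bigcup_q (if `[< rat_box q `<=` O >] then rat_box q else set0).
Proof.
move=> oO; apply/seteqP; split => [u Ou|u [q _]]; last first.
  by case: ifPn => [/asboolP sub /sub|].
have /nbhs_ballP [e /= e0 He] := oO u Ou.
have near_coord i : exists q : rat * rat,
    (u 0 i - e < ratr q.1 < u 0 i) /\ (u 0 i < ratr q.2 < u 0 i + e).
  have [a ha] := @rat_in_itvoo R (u 0 i - e) (u 0 i) ltac:(lra).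
  have [b hb] := @rat_in_itvoo R (u 0 i) (u 0 i + e) ltac:(lra).
  by exists (a, b); move: ha hb; rewrite !in_itv /= => -> ->.
have [q hq] := choice near_coord.
exists (\row_i (q i).1, \row_i (q i).2) => //.
rewrite asboolT.
  by move=> i; rewrite /= !mxE; have [/andP[_ ->] /andP[-> _]] := hq i.
move=> v /= hv; apply: He; split => // i j; rewrite (ord1 i).
have := hv j; rewrite !mxE; have [/andP[h1 h2] /andP[h3 h4]] := hq j.
move=> /andP[h5 h6].
rewrite -ball_normE /ball_ /= ltr_norml; apply/andP; split; lra.
Qed.

Variable V : R -> 'rV[R]_N.
Hypothesis mV : forall i, measurable_fun setT (fun x => V x 0 i).

Lemma measurable_preimage_rat_box q : measurable (V @^-1` rat_box q).
Proof.
have -> : V @^-1` rat_box q = \bigcap_(i in [set: 'I_N])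
    ([set: R] `&` (fun x => V x 0 i) @^-1` `]ratr (q.1 0 i), ratr (q.2 0 i)[).
  apply/seteqP; split => x /=.
    by move=> h i _; split => //=; rewrite in_itv /=; exact: h.
  by move=> h i; have [_ /=] := h i Logic.I; rewrite in_itv.
apply: fin_bigcap_measurable; first exact: finite_finset.
by move=> i _; apply: mV => //; exact: measurable_itv.
Qed.

Lemma measurable_preimage_open (O : set 'rV[R]_N) :
  open O -> measurable (V @^-1` O).
Proof.
move=> /open_bigcup_rat_box ->; rewrite preimage_bigcup.
apply: countable_bigcupT_measurable; first exact: countableP.
move=> q; case: ifPn => _; last by rewrite preimage_set0.
exact: measurable_preimage_rat_box.
Qed.

Lemma measurable_fun_comp_continuous (W : 'rV[R]_N -> R) :
  continuous W -> measurable_fun setT (W \o V).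
Proof.
move=> cW; apply: (measurability _ (RGenOpens.measurableE R)).
move=> _ [_ [a [b ->]] <-]; rewrite setTI comp_preimage.
apply: measurable_preimage_open.
by move/continuousP: cW; apply; exact: interval_open.
Qed.

End RowMeasurability.

Lemma near_within_upper_bound (R : realType) (A : set R) c : A c ->
  exists c2, [/\ A c2, c <= c2 & \forall t \near c, A t -> t <= c2].
Proof.
move=> Ac; have [[c2 [Ac2 lt_cc2]]|no] := pselect (exists c2, A c2 /\ c < c2).
  exists c2; split => //; first exact: ltW.
  have cI : c \in `]c - 1, c2[ by rewrite in_itv /= lt_cc2 andbT; lra.
  near=> t => _.
  have : t \in `]c - 1, c2[ by near: t; exact: near_in_itvoo cI.
  by rewrite in_itv /= => /andP[_ /ltW].
exists c; split => //; near=> t => At.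
by rewrite leNgt; apply/negP => ct; apply: no; exists t.
Unshelve. all: by end_near.
Qed.

Lemma near_within_lower_bound (R : realType) (A : set R) c : A c ->
  exists c1, [/\ A c1, c1 <= c & \forall t \near c, A t -> c1 <= t].
Proof.
move=> Ac; have [[c1 [Ac1 lt_c1c]]|no] := pselect (exists c1, A c1 /\ c1 < c).
  exists c1; split => //; first exact: ltW.
  have cI : c \in `]c1, c + 1[ by rewrite in_itv /= lt_c1c /=; lra.
  near=> t => _.
  have : t \in `]c1, c + 1[ by near: t; exact: near_in_itvoo cI.
  by rewrite in_itv /= => /andP[/ltW].
exists c; split => //; near=> t => At.
by rewrite leNgt; apply/negP => ct; apply: no; exists t.
Unshelve. all: by end_near.
Qed.

Lemma expR_mul_le_add (R : realType) (c1 c2 t y : R) : c1 <= t <= c2 ->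
  expR (t * y) <= expR (c1 * y) + expR (c2 * y).
Proof.
move=> /andP[c1t tc2]; have [y0|y0] := leP 0 y.
  by apply: ler_wpDl; rewrite ?expR_ge0 // ler_expR ler_wpM2r.
by apply: ler_wpDr; rewrite ?expR_ge0 // ler_expR ler_wnM2r // ltW.
Qed.

Definition clamp (R : realType) (a b t : R) := Num.max a (Num.min t b).

Lemma clamp_itv (R : realType) (a b t : R) : a <= b -> a <= clamp a b t <= b.
Proof. by move=> ab; rewrite le_max lexx ge_max ab ge_min lexx orbT. Qed.

Lemma clamp_id (R : realType) (a b t : R) : a <= t <= b -> clamp a b t = t.
Proof. by move=> /andP[a_t t_b]; rewrite /clamp min_l // max_r. Qed.

Lemma continuous_clamp (R : realType) (a b : R) : continuous (clamp a b).
Proof.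
move=> x; apply: (@continuous_max R R (fun=> a) (fun t => Num.min t b) x).
  exact: cst_continuous.
apply: (@continuous_min R R idfun (fun=> b) x); first exact: cvg_id.
exact: cst_continuous.
Qed.

Definition exp_weighted (R : realType) (g : R -> R) (c x : R) :=
  g x * expR (c * x).

Definition exp_weighted_integral (R : realType) (g : R -> R) (c : R) :=
  (\int[lebesgue_measure]_(x in setT) (exp_weighted g c x)%:E)%E.

Section ExpWeightedIntegral.
Variables (R : realType) (g : R -> R).
Hypothesis mg : measurable_fun setT g.

Lemma measurable_fun_exp_weighted c : measurable_fun setT (exp_weighted g c).
Proof. by apply: measurable_funM => //; apply: measurableT_comp. Qed.

Lemma exp_weighted_integrable c : exp_weighted_integral g c \is a fin_num ->
  lebesgue_measure.-integrable setT (EFin \o exp_weighted g c).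
Proof.
move=> fin_c; apply: fin_num_integrable => //.
by apply/measurable_EFinP; exact: measurable_fun_exp_weighted.
Qed.

Variables c1 c2 : R.
Hypotheses (c12 : c1 <= c2) (fin_c1 : exp_weighted_integral g c1 \is a fin_num)
  (fin_c2 : exp_weighted_integral g c2 \is a fin_num).

Let dominant y := `|g y| * (expR (c1 * y) + expR (c2 * y)).

Let exp_weighted_clamp_le t y :
  `|exp_weighted g (clamp c1 c2 t) y| <= dominant y.
Proof.
rewrite normrM (ger0_norm (expR_ge0 _)); apply: ler_wpM2l => //.
exact/expR_mul_le_add/clamp_itv.
Qed.

Let dominant_integrable :
  lebesgue_measure.-integrable setT (EFin \o dominant).
Proof.
have i1 := integrable_norm (exp_weighted_integrable fin_c1).
have i2 := integrable_norm (exp_weighted_integrable fin_c2).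
apply: eq_integrable (integrableD _ i1 i2) => // y _.
by rewrite /dominant /= mulrDr !normrM !(ger0_norm (expR_ge0 _)).
Qed.

(* Clamping the parameter into [c1, c2] lets a single dominating function serve
   for every t, while leaving the integral unchanged on [c1, c2]. *)
Lemma continuous_clamped_exp_weighted_integral : continuous (fun t =>
  \int[lebesgue_measure]_(x in setT) exp_weighted g (clamp c1 c2 t) x).
Proof.
move=> c.
have dominant_ge0 y : 0 <= dominant y.
  exact: le_trans (normr_ge0 _) (exp_weighted_clamp_le c y).
have int_clamp t : `]c - 1, c + 1[%classic t ->
    lebesgue_measure.-integrable setT (EFin \o exp_weighted g (clamp c1 c2 t)).
  move=> _; apply: le_integrable dominant_integrable => //.
    by apply/measurable_EFinP; exact: measurable_fun_exp_weighted.
  by move=> y _ /=; rewrite lee_fin (ger0_norm (dominant_ge0 y)).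
have cont_clamp : {ae lebesgue_measure, forall y, setT y ->
    {in `]c - 1, c + 1[%classic,
      continuous (fun t => exp_weighted g (clamp c1 c2 t) y)}}.
  apply: aeW => y _ t _; apply: cvgM; first exact: cvg_cst.
  apply: (@continuous_comp _ _ _ (fun t => clamp c1 c2 t * y) expR).
    by apply: cvgM; [exact: continuous_clamp | exact: cvg_cst].
  exact: continuous_expR.
have cI : c \in `]c - 1, c + 1[%classic by rewrite inE /= in_itv /=; lra.
apply: (continuity_under_integral measurableT int_clamp cont_clamp
  dominant_integrable _ cI) => t _.
by apply: aeW => y _; exact: exp_weighted_clamp_le.
Qed.

End ExpWeightedIntegral.

Lemma fine_exp_weighted_integral_clamp (R : realType) (g : R -> R) (c1 c2 t : R) :
  c1 <= t <= c2 -> fine (exp_weighted_integral g t) =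
  \int[lebesgue_measure]_(x in setT) exp_weighted g (clamp c1 c2 t) x.
Proof. by move=> /clamp_id ct; rewrite /Rintegral ct. Qed.

Lemma continuous_exp_weighted_integral (R : realType) (g : R -> R) (A : set R) :
  measurable_fun setT g ->
  (forall c, A c -> exp_weighted_integral g c \is a fin_num) ->
  {within A, continuous (fun c => fine (exp_weighted_integral g c))}.
Proof.
move=> mg finA; apply/subspace_continuousP => c Ac.
have [c2 [Ac2 cc2 near_c2]] := near_within_upper_bound Ac.
have [c1 [Ac1 c1c near_c1]] := near_within_lower_bound Ac.
have c12 : c1 <= c2 by exact: le_trans c1c cc2.
have cont := @continuous_clamped_exp_weighted_integral _ _ mg _ _ c12
  (finA _ Ac1) (finA _ Ac2) c.
rewrite [X in _ --> X](@fine_exp_weighted_integral_clamp _ _ c1 c2) ?c1c ?cc2 //.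
apply: cvg_trans (cvg_within_filter _ cont); apply: near_eq_cvg.
have near_c12 : \forall t \near c, A t -> c1 <= t <= c2.
  by near=> t => At; rewrite (near near_c1 t) ?(near near_c2 t).
apply: filterS near_c12 => t h At.
by rewrite /from_subspace/= (@fine_exp_weighted_integral_clamp _ _ c1 c2) ?h.
Unshelve. all: by end_near.
Qed.

Lemma enorm_sqr (R : realType) (N : nat) (u : 'rV[R]_N) :
  enorm u ^+ 2 = \sum_(i < N) u 0 i ^+ 2.
Proof. by rewrite /enorm sqr_sqrtr // sumr_ge0 // => i _; exact: sqr_ge0. Qed.

Theorem mainTheorem13 (R : realType) (N : nat) (W : 'rV[R]_N -> R)
    (aP aM : 'rV[R]_N) (r0 : R)
    (hW : C2 W)
    (hP : local_min W aP) (hM : local_min W aM)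
    (hWval : W aM < 0 /\ W aP = 0)
    (hglob : forall u, W aM <= W u)
    (hcpt : compact (W @^-1` `[W aM, 0]))
    (hr0 : 0 < r0)
    (hr0P : forall u, enorm (u - aP) <= r0 -> 0 <= W u)
    (hr0M : forall u, enorm (u - aM) <= r0 -> W u < 0)
    (L : R) (hL : 1 <= L) (V Vx : R -> 'rV[R]_N)
    (hV : XL aP aM r0 L V Vx) :
  {within [set c | 0 < c /\ Ec W c V Vx \is a fin_num],
    continuous (fun c => fine (Ec W c V Vx))}.
Proof.
have [[cW _] [hH _]] := (hW, hV).
pose g x := 2^-1 * enorm (Vx x) ^+ 2 + W (V x).
have mg : measurable_fun setT g.
  apply: measurable_funD.
    apply: measurable_funM; first exact: measurable_cst.
    rewrite (_ : (fun x => enorm (Vx x) ^+ 2) =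
                 (fun x => \sum_(i < N) Vx x 0 i ^+ 2)); last first.
      by apply/funext => x; rewrite enorm_sqr.
    by apply: measurable_sum => i; apply: measurable_funX; exact: (hH i).2.1.1.
  exact: measurable_fun_comp_continuous (fun i => (hH i).1.1) _ cW.
change {within [set c | 0 < c /\ exp_weighted_integral g c \is a fin_num],
  continuous (fun c => fine (exp_weighted_integral g c))}.
by apply: continuous_exp_weighted_integral => // c [].
Qed.
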